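(* Let $m\ge2$, $f_1,\dots,f_m:X\to\mathbb R_{+\infty}$, $x\in\bigcap_{i=1}^m\operatorname{dom} f_i$, and suppose the zero function $0$ belongs to $\mathcal L$. The following are equivalent: (i) $0\in\bigcap_{\varepsilon>0}\sum_{i=1}^m\partial_\varepsilon f_i(x)$; (ii) $\left(\sum_{i=1}^m f_i\right)^*(0)=(f_1^*\square\cdots\square f_m^* )(0)<+\infty$, and $x$ minimizes $\sum_{i=1}^m f_i$ over $X$.
   Context: $X$ is a nonempty set; $\mathbb R_{+\infty}=\mathbb R\cup\{+\infty\}$. A space of abstract linear functions is a family $\mathcal L$ of functions $l:X\to\mathbb R$ such that (a) $l_1,l_2\in\mathcal L$ implies $l_1+l_2\in\mathcal L$, and (b) for every $l\in\mathcal L$ and $m\in\mathbb N$ there exist $l_1,\dots,l_m\in\mathcal L$ with $l=l_1+\dots+l_m$. For $f:X\to\mathbb R_{+\infty}$: $\operatorname{dom} f=\{x:f(x)<+\infty\}$; $f^*(l)=\sup_{x\in X}(l(x)-f(x))$. Infimal convolution: $(g_1\square\cdots\square g_m)(l)=\inf\{\sum_i g_i(l_i):l_i\in\mathcal L,\ \sum_i l_i=l\}$. For $\varepsilon\ge0$ and $x\in\operatorname{dom} f$, $\partial_\varepsilon f(x)=\{l\in\mathcal L: f(y)-f(x)-(l(y)-l(x))+\varepsilon\ge0\ \forall y\in X\}$. Sums of subsets of $\mathcal L$ are Minkowski sums. *)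

From Stdlib Require Import Reals.
Open Scope R_scope.

Inductive Rpinf : Type := PFin (r : R) | PInf.

Definition Rpinf_le (a b : Rpinf) : Prop :=
  match a, b with
  | _, PInf => True
  | PInf, PFin _ => False
  | PFin x, PFin y => x <= y
  end.

Definition Rpinf_plus (a b : Rpinf) : Rpinf :=
  match a, b with
  | PFin x, PFin y => PFin (x + y)
  | _, _ => PInf
  end.

Inductive Rbar : Type := Fin (r : R) | Pinf | Minf.

Definition Rbar_le (a b : Rbar) : Prop :=
  match a, b with
  | Minf, _ => True
  | _, Pinf => True
  | Pinf, _ => False
  | _, Minf => False
  | Fin x, Fin y => x <= y
  end.

Definition Rbar_lt (a b : Rbar) : Prop := Rbar_le a b /\ a <> b.

(* inf-addition convention: (+oo) + (-oo) = +oo *)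
Definition Rbar_plus (a b : Rbar) : Rbar :=
  match a, b with
  | Pinf, _ | _, Pinf => Pinf
  | Minf, _ | _, Minf => Minf
  | Fin x, Fin y => Fin (x + y)
  end.

Definition minus_Rpinf (r : R) (a : Rpinf) : Rbar :=
  match a with PFin y => Fin (r - y) | PInf => Minf end.

Definition is_sup_Rbar (S : Rbar -> Prop) (v : Rbar) : Prop :=
  (forall s, S s -> Rbar_le s v) /\
  (forall u, (forall s, S s -> Rbar_le s u) -> Rbar_le v u).

Definition is_inf_Rbar (S : Rbar -> Prop) (v : Rbar) : Prop :=
  (forall s, S s -> Rbar_le v s) /\
  (forall u, (forall s, S s -> Rbar_le u s) -> Rbar_le u v).

(* finite sums over indices 0 .. k-1 *)
Fixpoint sumR (k : nat) (a : nat -> R) : R :=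
  match k with O => 0 | S k' => sumR k' a + a k' end.

Fixpoint sumRpinf (k : nat) (a : nat -> Rpinf) : Rpinf :=
  match k with O => PFin 0 | S k' => Rpinf_plus (sumRpinf k' a) (a k') end.

Fixpoint sumRbar (k : nat) (a : nat -> Rbar) : Rbar :=
  match k with O => Fin 0 | S k' => Rbar_plus (sumRbar k' a) (a k') end.

Section Abstract.
Variable X : Type.

Definition abstract_linear_space (L : (X -> R) -> Prop) : Prop :=
  (forall l1 l2, L l1 -> L l2 -> L (fun y => l1 y + l2 y)) /\
  (forall l (k : nat), L l -> (1 <= k)%nat ->
     exists ls : nat -> X -> R,
       (forall i, (i < k)%nat -> L (ls i)) /\
       (forall y, l y = sumR k (fun i => ls i y))).

Definition in_dom (f : X -> Rpinf) (x : X) : Prop :=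
  exists r, f x = PFin r.

Definition conj_value (f : X -> Rpinf) (l : X -> R) (v : Rbar) : Prop :=
  is_sup_Rbar (fun s => exists y, s = minus_Rpinf (l y) (f y)) v.

Definition infconv_conj_value (L : (X -> R) -> Prop) (m : nat)
    (f : nat -> X -> Rpinf) (l : X -> R) (v : Rbar) : Prop :=
  is_inf_Rbar
    (fun s => exists (ls : nat -> X -> R) (vs : nat -> Rbar),
        (forall i, (i < m)%nat -> L (ls i)) /\
        (forall y, l y = sumR m (fun i => ls i y)) /\
        (forall i, (i < m)%nat -> conj_value (f i) (ls i) (vs i)) /\
        s = sumRbar m vs)
    v.

Definition eps_subdiff (L : (X -> R) -> Prop) (eps : R) (f : X -> Rpinf)
    (x : X) (l : X -> R) : Prop :=
  L l /\
  match f x with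
  | PInf => False
  | PFin fx => forall y, match f y with
                         | PInf => True
                         | PFin fy => 0 <= fy - fx - (l y - l x) + eps
                         end
  end.

Definition sum_fun (m : nat) (f : nat -> X -> Rpinf) : X -> Rpinf :=
  fun y => sumRpinf m (fun i => f i y).

End Abstract.

(** Write F = f_1 + ... + f_m and let l_i range over decompositions of 0.
    Summing the Fenchel–Young inequalities f_i^*(l_i) >= l_i(x) - f_i(x) gives
    sum_i f_i^*(l_i) >= -F(x), and l_i is an ε-subgradient of f_i at x exactly
    when the gap f_i^*(l_i) - (l_i(x) - f_i(x)) is at most ε.  Hence (i) says
    that decompositions with total gap at most mε exist for every ε, which
    forces the infimal convolution at 0 to be -F(x) and x to minimise F, in
    which case F^*(0) = -F(x) as well.  Conversely, if the infimal convolution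
    equals F^*(0) = -F(x), a decomposition with total gap below ε has every
    (nonnegative) individual gap below ε. *)

From Stdlib Require Import Reals Lra Lia Classical.
Open Scope R_scope.

Lemma le_of_le_plus_scaled (a b K : R) :
  0 <= K -> (forall e, 0 < e -> a <= b + K * e) -> a <= b.
Proof.
  intros HK Hab. apply Rnot_lt_le. intros Hlt.
  set (e := (a - b) / (K + 1)).
  assert (He : 0 < e) by (apply Rdiv_lt_0_compat; lra).
  assert (Hdiff : b + K * e = a - e).
  { unfold e. field. lra. }
  specialize (Hab e He). lra.
Qed.

Lemma finite_choice (k : nat) (P : nat -> R -> Prop) :
  (forall i, (i < k)%nat -> exists w, P i w) ->
  exists w : nat -> R, forall i, (i < k)%nat -> P i (w i).
Proof.
  induction k as [|k IH]; intros H.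
  - exists (fun _ => 0). intros i Hi. lia.
  - destruct IH as [w Hw]; [intros i Hi; apply H; lia|].
    destruct (H k ltac:(lia)) as [wk Hwk].
    exists (fun i => if Nat.eqb i k then wk else w i). intros i Hi.
    destruct (Nat.eqb_spec i k) as [->|Hik]; [exact Hwk | apply Hw; lia].
Qed.

Lemma sumR_plus (k : nat) (a b : nat -> R) :
  sumR k (fun i => a i + b i) = sumR k a + sumR k b.
Proof. induction k as [|k IH]; simpl; [lra|]. rewrite IH. lra. Qed.

Lemma sumR_minus (k : nat) (a b : nat -> R) :
  sumR k (fun i => a i - b i) = sumR k a - sumR k b.
Proof. induction k as [|k IH]; simpl; [lra|]. rewrite IH. lra. Qed.

Lemma sumR_const (k : nat) (c : R) : sumR k (fun _ => c) = INR k * c.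
Proof. induction k as [|k IH]; simpl sumR; [simpl; lra|]. rewrite IH, S_INR. lra. Qed.

Lemma sumR_le (k : nat) (a b : nat -> R) :
  (forall i, (i < k)%nat -> a i <= b i) -> sumR k a <= sumR k b.
Proof.
  induction k as [|k IH]; intros H; simpl; [lra|].
  pose proof (H k ltac:(lia)). pose proof (IH ltac:(intros; apply H; lia)). lra.
Qed.

Lemma sumR_term_le (k : nat) (a : nat -> R) (j : nat) :
  (forall i, (i < k)%nat -> 0 <= a i) -> (j < k)%nat -> a j <= sumR k a.
Proof.
  induction k as [|k IH]; intros H Hj; [lia|]. simpl.
  assert (Hsum : 0 <= sumR k a).
  { pose proof (sumR_le k (fun _ => 0) a ltac:(intros; apply H; lia)) as Hs.
    rewrite sumR_const in Hs. lra. }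
  pose proof (H k ltac:(lia)).
  destruct (Nat.eq_dec j k) as [->|Hjk]; [lra|].
  pose proof (IH ltac:(intros; apply H; lia) ltac:(lia)). lra.
Qed.

Lemma sumR_gap_lt (k : nat) (a b : nat -> R) (e : R) :
  (forall i, (i < k)%nat -> a i <= b i) -> sumR k b < sumR k a + e ->
  forall j, (j < k)%nat -> b j < a j + e.
Proof.
  intros Hab Hsum j Hj.
  pose proof (sumR_term_le k (fun i => b i - a i) j
                ltac:(intros i Hi; specialize (Hab i Hi); lra) Hj) as Hterm.
  rewrite sumR_minus in Hterm. simpl in Hterm. lra.
Qed.

Lemma sumRpinf_fin (k : nat) (a : nat -> Rpinf) (w : nat -> R) :
  (forall i, (i < k)%nat -> a i = PFin (w i)) -> sumRpinf k a = PFin (sumR k w).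
Proof.
  induction k as [|k IH]; intros H; simpl; [reflexivity|].
  rewrite IH by (intros; apply H; lia). rewrite (H k) by lia. reflexivity.
Qed.

Lemma sumRpinf_cases (k : nat) (a : nat -> Rpinf) :
  sumRpinf k a = PInf \/
  exists w, (forall i, (i < k)%nat -> a i = PFin (w i)) /\
            sumRpinf k a = PFin (sumR k w).
Proof.
  destruct (classic (exists i, (i < k)%nat /\ a i = PInf)) as [[i [Hi Ha]]|Hfin].
  - left. induction k as [|k IH]; [lia|]. simpl.
    destruct (Nat.eq_dec i k) as [->|Hik].
    + rewrite Ha. destruct (sumRpinf k a); reflexivity.
    + rewrite IH by lia. reflexivity.
  - right. destruct (finite_choice k (fun i w => a i = PFin w)) as [w Hw].
    { intros i Hi. destruct (a i) as [r|] eqn:Ha; [eauto|].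
      exfalso. apply Hfin. eauto. }
    exists w. split; [exact Hw | apply sumRpinf_fin, Hw].
Qed.

Lemma sumRbar_fin (k : nat) (vs : nat -> Rbar) (w : nat -> R) :
  (forall i, (i < k)%nat -> vs i = Fin (w i)) -> sumRbar k vs = Fin (sumR k w).
Proof.
  induction k as [|k IH]; intros H; simpl; [reflexivity|].
  rewrite IH by (intros; apply H; lia). rewrite (H k) by lia. reflexivity.
Qed.

Lemma sumRbar_cases_ge (k : nat) (a : nat -> R) (vs : nat -> Rbar) :
  (forall i, (i < k)%nat -> Rbar_le (Fin (a i)) (vs i)) ->
  sumRbar k vs = Pinf \/
  exists w, (forall i, (i < k)%nat -> vs i = Fin (w i)) /\
            sumRbar k vs = Fin (sumR k w).
Proof.
  intros Hge.
  destruct (classic (exists i, (i < k)%nat /\ vs i = Pinf)) as [[i [Hi Hv]]|Hfin].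
  - left. clear Hge. induction k as [|k IH]; [lia|]. simpl.
    destruct (Nat.eq_dec i k) as [->|Hik].
    + rewrite Hv. destruct (sumRbar k vs); reflexivity.
    + rewrite IH by lia. reflexivity.
  - right. destruct (finite_choice k (fun i w => vs i = Fin w)) as [w Hw].
    { intros i Hi. specialize (Hge i Hi).
      destruct (vs i) as [r| |] eqn:Hv; [eauto | exfalso; eauto | contradiction]. }
    exists w. split; [exact Hw | apply sumRbar_fin, Hw].
Qed.

Lemma sumRbar_ge (k : nat) (a : nat -> R) (vs : nat -> Rbar) :
  (forall i, (i < k)%nat -> Rbar_le (Fin (a i)) (vs i)) ->
  Rbar_le (Fin (sumR k a)) (sumRbar k vs).
Proof.
  intros Hge. destruct (sumRbar_cases_ge k a vs Hge) as [->|[w [Hw ->]]]; simpl; [exact I|].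
  apply sumR_le. intros i Hi. specialize (Hge i Hi). rewrite Hw in Hge by exact Hi. exact Hge.
Qed.

Lemma Rbar_le_antisym (a b : Rbar) : Rbar_le a b -> Rbar_le b a -> a = b.
Proof. destruct a, b; simpl; intros; try tauto. f_equal. lra. Qed.

Lemma is_sup_Rbar_unique (S : Rbar -> Prop) (v w : Rbar) :
  is_sup_Rbar S v -> is_sup_Rbar S w -> v = w.
Proof.
  intros [Hv_ub Hv_least] [Hw_ub Hw_least].
  apply Rbar_le_antisym; [apply Hv_least, Hw_ub | apply Hw_least, Hv_ub].
Qed.

Lemma is_sup_Rbar_exists_fin (S : Rbar -> Prop) (a b : R) :
  S (Fin a) -> (forall s, S s -> Rbar_le s (Fin b)) ->
  exists c, is_sup_Rbar S (Fin c) /\ c <= b.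
Proof.
  intros Ha Hb.
  destruct (completeness (fun r => S (Fin r))) as [c [Hc_ub Hc_least]].
  - exists b. intros r Hr. exact (Hb _ Hr).
  - exists a. exact Ha.
  - exists c. split.
    + split.
      * intros [r| |] Hs; simpl; [apply Hc_ub; exact Hs | exact (Hb _ Hs) | exact I].
      * intros [r| |] Hu; simpl; [| exact I | exact (Hu _ Ha)].
        apply Hc_least. intros r' Hr'. exact (Hu _ Hr').
    + apply Hc_least. intros r Hr. exact (Hb _ Hr).
Qed.

Lemma is_inf_Rbar_approx (S : Rbar -> Prop) (c e : R) :
  is_inf_Rbar S (Fin c) -> 0 < e -> exists s, S s /\ ~ Rbar_le (Fin (c + e)) s.
Proof.
  intros [_ Hgreatest] He. apply NNPP. intros Hnone.
  assert (Hlb : Rbar_le (Fin (c + e)) (Fin c)).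
  { apply Hgreatest. intros s Hs. apply NNPP. intros Hn. apply Hnone. eauto. }
  simpl in Hlb. lra.
Qed.

Lemma Rbar_le_fin_approx (u : Rbar) (c K : R) :
  0 <= K -> (forall e, 0 < e -> Rbar_le u (Fin (c + K * e))) -> Rbar_le u (Fin c).
Proof.
  intros HK Hu. destruct u as [r| |]; simpl.
  - apply (le_of_le_plus_scaled r c K HK). exact Hu.
  - exact (Hu 1 Rlt_0_1).
  - exact I.
Qed.

Section Conjugate.
Variable X : Type.
Variable L : (X -> R) -> Prop.
Variables (f : X -> Rpinf) (x : X) (fx : R).
Hypothesis Hfx : f x = PFin fx.

Lemma fenchel_young (l : X -> R) (v : Rbar) (y : X) (fy : R) :
  conj_value X f l v -> f y = PFin fy -> Rbar_le (Fin (l y - fy)) v.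
Proof. intros [Hub _] Hfy. apply Hub. exists y. rewrite Hfy. reflexivity. Qed.

Lemma eps_subdiffP (eps : R) (l : X -> R) :
  eps_subdiff X L eps f x l <->
  L l /\ forall y fy, f y = PFin fy -> l y - fy <= l x - fx + eps.
Proof.
  unfold eps_subdiff. rewrite Hfx. split.
  - intros [Hl Hsub]. split; [exact Hl|]. intros y fy Hfy.
    specialize (Hsub y). rewrite Hfy in Hsub. lra.
  - intros [Hl Hsub]. split; [exact Hl|]. intros y.
    destruct (f y) as [fy|] eqn:Hfy; [|exact I].
    specialize (Hsub y fy Hfy). lra.
Qed.

Lemma eps_subdiff_conj_le (eps : R) (l : X -> R) :
  eps_subdiff X L eps f x l ->
  exists c, conj_value X f l (Fin c) /\ c <= l x - fx + eps.
Proof.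
  intros [_ Hsub]%eps_subdiffP.
  apply (is_sup_Rbar_exists_fin _ (l x - fx)).
  - exists x. rewrite Hfx. reflexivity.
  - intros s [y ->]. destruct (f y) as [fy|] eqn:Hfy; simpl; [|exact I].
    exact (Hsub y fy Hfy).
Qed.

Lemma eps_subdiff_of_conj_le (eps c : R) (l : X -> R) :
  L l -> conj_value X f l (Fin c) -> c <= l x - fx + eps ->
  eps_subdiff X L eps f x l.
Proof.
  intros Hl Hc Hle. apply eps_subdiffP. split; [exact Hl|].
  intros y fy Hfy. pose proof (fenchel_young l (Fin c) y fy Hc Hfy) as Hfy_le.
  simpl in Hfy_le. lra.
Qed.

End Conjugate.

Definition approx_zero_subdiff (X : Type) (L : (X -> R) -> Prop) (m : nat)
    (f : nat -> X -> Rpinf) (x : X) : Prop :=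
  forall eps, 0 < eps ->
    exists ls : nat -> X -> R,
      (forall i, (i < m)%nat -> eps_subdiff X L eps (f i) x (ls i)) /\
      (forall y, 0 = sumR m (fun i => ls i y)).

Definition is_minimizer (X : Type) (F : X -> Rpinf) (x : X) : Prop :=
  forall y, Rpinf_le (F x) (F y).

Section SumAtPoint.
Variable X : Type.
Variable L : (X -> R) -> Prop.
Variables (m : nat) (f : nat -> X -> Rpinf) (x : X) (fx : nat -> R).
Hypothesis Hfx : forall i, (i < m)%nat -> f i x = PFin (fx i).

Let F := sum_fun X m f.

Lemma sum_fun_at : F x = PFin (sumR m fx).
Proof. apply sumRpinf_fin, Hfx. Qed.

Lemma conj_sum_fun_at_minimizer :
  is_minimizer X F x -> conj_value X F (fun _ => 0) (Fin (- sumR m fx)).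
Proof.
  intros Hmin. split.
  - intros s [y ->]. specialize (Hmin y). rewrite sum_fun_at in Hmin.
    destruct (F y) as [Fy|]; simpl in *; [lra | exact I].
  - intros u Hu. replace (- sumR m fx) with (0 - sumR m fx) by ring.
    apply Hu. exists x. rewrite sum_fun_at. reflexivity.
Qed.

Lemma minimizer_of_approx_zero_subdiff :
  approx_zero_subdiff X L m f x -> is_minimizer X F x.
Proof.
  intros Happrox y. rewrite sum_fun_at. unfold F, sum_fun.
  destruct (sumRpinf_cases m (fun i => f i y)) as [->|[fy [Hfy ->]]]; simpl; [exact I|].
  apply (le_of_le_plus_scaled _ _ (INR m) (pos_INR m)). intros e He.
  destruct (Happrox e He) as [ls [Hsub Hsum0]].
  assert (Hgap : sumR m (fun i => ls i y - fy i) <= sumR m (fun i => ls i x - fx i + e)).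
  { apply sumR_le. intros i Hi.
    apply (proj2 (proj1 (eps_subdiffP X L (f i) x (fx i) (Hfx i Hi) e (ls i)) (Hsub i Hi))).
    apply Hfy, Hi. }
  rewrite sumR_plus, !sumR_minus, sumR_const, <- !Hsum0 in Hgap. lra.
Qed.

Lemma sumRbar_conj_ge (ls : nat -> X -> R) (vs : nat -> Rbar) :
  (forall i, (i < m)%nat -> conj_value X (f i) (ls i) (vs i)) ->
  (forall y, 0 = sumR m (fun i => ls i y)) ->
  Rbar_le (Fin (- sumR m fx)) (sumRbar m vs).
Proof.
  intros Hconj Hsum0.
  replace (- sumR m fx) with (sumR m (fun i => ls i x - fx i))
    by (rewrite sumR_minus, <- Hsum0; ring).
  apply sumRbar_ge. intros i Hi.
  exact (fenchel_young X (f i) (ls i) (vs i) x (fx i) (Hconj i Hi) (Hfx i Hi)).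
Qed.

Lemma infconv_of_approx_zero_subdiff :
  approx_zero_subdiff X L m f x ->
  infconv_conj_value X L m f (fun _ => 0) (Fin (- sumR m fx)).
Proof.
  intros Happrox. split.
  - intros s [ls [vs [_ [Hsum0 [Hconj ->]]]]]. exact (sumRbar_conj_ge ls vs Hconj Hsum0).
  - intros u Hu. apply (Rbar_le_fin_approx u _ (INR m) (pos_INR m)). intros e He.
    destruct (Happrox e He) as [ls [Hsub Hsum0]].
    destruct (finite_choice m (fun i c =>
        conj_value X (f i) (ls i) (Fin c) /\ c <= ls i x - fx i + e)) as [w Hw].
    { intros i Hi. exact (eps_subdiff_conj_le X L (f i) x (fx i) (Hfx i Hi) e (ls i) (Hsub i Hi)). }
    assert (Hwsum : sumR m w <= - sumR m fx + INR m * e).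
    { pose proof (sumR_le m w (fun i => ls i x - fx i + e) (fun i Hi => proj2 (Hw i Hi))) as Hle.
      rewrite sumR_plus, sumR_minus, sumR_const, <- Hsum0 in Hle. lra. }
    assert (Hu_w : Rbar_le u (Fin (sumR m w))).
    { rewrite <- (sumRbar_fin m (fun i => Fin (w i)) w) by (intros; reflexivity).
      apply Hu. exists ls, (fun i => Fin (w i)). split; [|split; [|split]].
      - intros i Hi. exact (proj1 (Hsub i Hi)).
      - exact Hsum0.
      - intros i Hi. exact (proj1 (Hw i Hi)).
      - reflexivity. }
    destruct u as [r| |]; simpl in *; [lra | exact Hu_w | exact I].
Qed.

Lemma approx_zero_subdiff_of_infconv :
  infconv_conj_value X L m f (fun _ => 0) (Fin (- sumR m fx)) ->
  approx_zero_subdiff X L m f x.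
Proof.
  intros Hinf eps Heps.
  destruct (is_inf_Rbar_approx _ _ eps Hinf Heps)
    as [s [[ls [vs [HL [Hsum0 [Hconj ->]]]]] Hnot_le]].
  assert (Hfy : forall i, (i < m)%nat -> Rbar_le (Fin (ls i x - fx i)) (vs i))
    by (intros i Hi; exact (fenchel_young X (f i) (ls i) (vs i) x (fx i) (Hconj i Hi) (Hfx i Hi))).
  destruct (sumRbar_cases_ge m _ vs Hfy) as [Hpinf|[w [Hw Hsum]]].
  { rewrite Hpinf in Hnot_le. simpl in Hnot_le. tauto. }
  rewrite Hsum in Hnot_le. simpl in Hnot_le. apply Rnot_le_lt in Hnot_le.
  assert (Hgap : forall j, (j < m)%nat -> w j < ls j x - fx j + eps).
  { apply sumR_gap_lt.
    - intros i Hi. specialize (Hfy i Hi). rewrite Hw in Hfy by exact Hi. exact Hfy.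
    - rewrite sumR_minus, <- Hsum0. lra. }
  exists ls. split; [|exact Hsum0]. intros i Hi.
  apply (eps_subdiff_of_conj_le X L (f i) x (fx i) (Hfx i Hi) eps (w i)); [exact (HL i Hi) | |].
  - rewrite <- Hw by exact Hi. exact (Hconj i Hi).
  - left. exact (Hgap i Hi).
Qed.

End SumAtPoint.

Theorem mainTheorem6 (X : Type) (L : (X -> R) -> Prop)
  (HL : abstract_linear_space X L) (HX : inhabited X)
  (m : nat) (Hm : (2 <= m)%nat) (f : nat -> X -> Rpinf) (x : X)
  (Hx : forall i, (i < m)%nat -> in_dom X (f i) x)
  (H0 : L (fun _ => 0)) :
  (forall eps, 0 < eps ->
     exists ls : nat -> X -> R,
       (forall i, (i < m)%nat -> eps_subdiff X L eps (f i) x (ls i)) /\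
       (forall y, 0 = sumR m (fun i => ls i y)))
  <->
  ((exists v : Rbar,
      conj_value X (sum_fun X m f) (fun _ => 0) v /\
      infconv_conj_value X L m f (fun _ => 0) v /\
      Rbar_lt v Pinf) /\
   (forall y, Rpinf_le (sum_fun X m f x) (sum_fun X m f y))).
Proof.
  destruct (finite_choice m (fun i r => f i x = PFin r) Hx) as [fx Hfx].
  split.
  - intros Happrox.
    pose proof (minimizer_of_approx_zero_subdiff X L m f x fx Hfx Happrox) as Hmin.
    split; [|exact Hmin].
    exists (Fin (- sumR m fx)). split; [|split].
    + exact (conj_sum_fun_at_minimizer X m f x fx Hfx Hmin).
    + exact (infconv_of_approx_zero_subdiff X L m f x fx Hfx Happrox).
    + split; [exact I | discriminate].
  - intros [[v [Hconj [Hinf _]]] Hmin].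
    assert (Hv : v = Fin (- sumR m fx))
      by exact (is_sup_Rbar_unique _ _ _ Hconj (conj_sum_fun_at_minimizer X m f x fx Hfx Hmin)).
    subst v. exact (approx_zero_subdiff_of_infconv X L m f x fx Hfx Hinf).
Qed.
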